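(* In System $\mathsf{F_\wedge}$, if $\Theta, X <: S, \Theta' \vdash t : T$, then $\Theta, X <: \top, \Theta'[X\wedge S/X] \vdash t[X\wedge S/X] : T[X \wedge S/X]$.
   Context: System $\mathsf{F_\wedge}$: raw types $T ::= \top \mid X \mid T \to T \mid \forall X.T \mid T \wedge T$ ($\forall X.T$ means $\forall(X<:\top).T$), up to $\alpha$-conversion. Contexts: finite sequences of $X<:T$ or $x:T$ with distinct variables, each type well-formed over the preceding part. Subtyping rules: (Var) $\Theta,X<:T,\Theta'\vdash X<:T$; (Top) $T<:\top$; (Refl); (Trans); ($\to$) from $S'<:S$, $T<:T'$ infer $S\to T<:S'\to T'$; ($\forall$) from $\Theta,X<:\top\vdash S<:T$ infer $\Theta\vdash\forall X.S<:\forall X.T$; (meet) $S\wedge S'<:S$, $S\wedge S'<:S'$, from $T<:S$, $T<:S'$ infer $T<:S\wedge S'$. Raw terms $t ::= \mathsf{top} \mid x \mid \lambda(x:T).t \mid \Lambda(X<:T).t \mid t\,t \mid t\{T\}$. Typing rules: $\Theta\vdash\mathsf{top}:\top$; $\Theta,x:T,\Theta'\vdash x:T$; (sub) from $t:T$ and $T<:T'$ infer $t:T'$; from $\Theta,x:S\vdash t:T$ infer $\Theta\vdash\lambda(x:S).t:S\to T$; from $t:S\to T$ and $s:S$ infer $t\,s:T$; from $\Theta,X<:S\vdash t:T$ infer $\Theta\vdash\Lambda(X<:S).t:\forall(X<:S).T$; from $\Theta\vdash t:\forall(X<:S).T$ and $\Theta\vdash S'<:S$ infer $\Theta\vdash t\{S'\}:T[S'/X]$.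 For a context or term, $[X\wedge S/X]$ denotes substituting $X\wedge S$ for the type variable $X$ in all types occurring in it (type annotations, bounds, assumption types). *)

(* Free variables are atoms (nat); bound variables are de Bruijn indices.
   Raw terms/types "up to alpha-conversion" = locally nameless syntax. *)
From Stdlib Require Import List Arith.
Import ListNotations.

Definition atom := nat.

(* Types.  [tall U T] is the bounded quantifier forall (X <: U). T ;
   the paper's  forall X. T  is  [tall ttop T]. *)
Inductive typ : Type :=
  | ttop  : typ
  | tbvar : nat -> typ
  | tfvar : atom -> typ
  | tarr  : typ -> typ -> typ
  | tall  : typ -> typ -> typ
  | tmeet : typ -> typ -> typ.

Inductive trm : Type :=
  | ttopv : trm
  | bvar  : nat -> trm
  | fvar  : atom -> trm
  | abs   : typ -> trm -> trm
  | tabs  : typ -> trm -> trm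
  | app   : trm -> trm -> trm
  | tapp  : trm -> typ -> trm.

Fixpoint open_tt_rec (k : nat) (U : typ) (T : typ) : typ :=
  match T with
  | ttop => ttop
  | tbvar j => if Nat.eqb k j then U else tbvar j
  | tfvar X => tfvar X
  | tarr T1 T2 => tarr (open_tt_rec k U T1) (open_tt_rec k U T2)
  | tall T1 T2 => tall (open_tt_rec k U T1) (open_tt_rec (S k) U T2)
  | tmeet T1 T2 => tmeet (open_tt_rec k U T1) (open_tt_rec k U T2)
  end.
Definition open_tt (T U : typ) := open_tt_rec 0 U T.

Fixpoint open_te_rec (k : nat) (U : typ) (e : trm) : trm :=
  match e with
  | ttopv => ttopv
  | bvar i => bvar i
  | fvar x => fvar x
  | abs V e1 => abs (open_tt_rec k U V) (open_te_rec k U e1)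
  | tabs V e1 => tabs (open_tt_rec k U V) (open_te_rec (S k) U e1)
  | app e1 e2 => app (open_te_rec k U e1) (open_te_rec k U e2)
  | tapp e1 V => tapp (open_te_rec k U e1) (open_tt_rec k U V)
  end.
Definition open_te (e : trm) (U : typ) := open_te_rec 0 U e.

Fixpoint open_ee_rec (k : nat) (f : trm) (e : trm) : trm :=
  match e with
  | ttopv => ttopv
  | bvar i => if Nat.eqb k i then f else bvar i
  | fvar x => fvar x
  | abs V e1 => abs V (open_ee_rec (S k) f e1)
  | tabs V e1 => tabs V (open_ee_rec k f e1)
  | app e1 e2 => app (open_ee_rec k f e1) (open_ee_rec k f e2)
  | tapp e1 V => tapp (open_ee_rec k f e1) V
  end.
Definition open_ee (e f : trm) := open_ee_rec 0 f e.

Fixpoint subst_tt (Z : atom) (U : typ) (T : typ) : typ :=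
  match T with
  | ttop => ttop
  | tbvar j => tbvar j
  | tfvar X => if Nat.eqb X Z then U else tfvar X
  | tarr T1 T2 => tarr (subst_tt Z U T1) (subst_tt Z U T2)
  | tall T1 T2 => tall (subst_tt Z U T1) (subst_tt Z U T2)
  | tmeet T1 T2 => tmeet (subst_tt Z U T1) (subst_tt Z U T2)
  end.

Fixpoint subst_te (Z : atom) (U : typ) (e : trm) : trm :=
  match e with
  | ttopv => ttopv
  | bvar i => bvar i
  | fvar x => fvar x
  | abs V e1 => abs (subst_tt Z U V) (subst_te Z U e1)
  | tabs V e1 => tabs (subst_tt Z U V) (subst_te Z U e1)
  | app e1 e2 => app (subst_te Z U e1) (subst_te Z U e2)
  | tapp e1 V => tapp (subst_te Z U e1) (subst_tt Z U V)
  end.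

(* Contexts: lists in paper order (leftmost binding first). *)
Inductive binding : Type :=
  | bsub : typ -> binding
  | btyp : typ -> binding.

Definition env := list (atom * binding).

Definition dom (E : env) : list atom := map fst E.

Definition subst_b (Z : atom) (U : typ) (b : binding) : binding :=
  match b with
  | bsub T => bsub (subst_tt Z U T)
  | btyp T => btyp (subst_tt Z U T)
  end.

Definition subst_env (Z : atom) (U : typ) (E : env) : env :=
  map (fun p => (fst p, subst_b Z U (snd p))) E.

Inductive wf_typ : env -> typ -> Prop :=
  | wf_typ_top : forall E, wf_typ E ttop
  | wf_typ_var : forall E X U, In (X, bsub U) E -> wf_typ E (tfvar X)
  | wf_typ_arrow : forall E T1 T2,
      wf_typ E T1 -> wf_typ E T2 -> wf_typ E (tarr T1 T2)
  | wf_typ_all : forall (L : list atom) E T1 T2,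
      wf_typ E T1 ->
      (forall X, ~ In X L ->
         wf_typ (E ++ [(X, bsub T1)]) (open_tt T2 (tfvar X))) ->
      wf_typ E (tall T1 T2)
  | wf_typ_meet : forall E T1 T2,
      wf_typ E T1 -> wf_typ E T2 -> wf_typ E (tmeet T1 T2).

Inductive wf_env : env -> Prop :=
  | wf_env_empty : wf_env []
  | wf_env_sub : forall E X T,
      wf_env E -> wf_typ E T -> ~ In X (dom E) ->
      wf_env (E ++ [(X, bsub T)])
  | wf_env_typ : forall E x T,
      wf_env E -> wf_typ E T -> ~ In x (dom E) ->
      wf_env (E ++ [(x, btyp T)]).

Inductive sub : env -> typ -> typ -> Prop :=
  | sub_var : forall E X T,
      wf_env E -> In (X, bsub T) E -> sub E (tfvar X) T
  | sub_top : forall E S,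
      wf_env E -> wf_typ E S -> sub E S ttop
  | sub_refl : forall E T,
      wf_env E -> wf_typ E T -> sub E T T
  | sub_trans : forall E S T U,
      sub E S T -> sub E T U -> sub E S U
  | sub_arrow : forall E S S' T T',
      sub E S' S -> sub E T T' -> sub E (tarr S T) (tarr S' T')
  | sub_all : forall (L : list atom) E S T,
      (forall X, ~ In X L ->
         sub (E ++ [(X, bsub ttop)]) (open_tt S (tfvar X)) (open_tt T (tfvar X))) ->
      sub E (tall ttop S) (tall ttop T)
  | sub_meet_l : forall E S S',
      wf_env E -> wf_typ E S -> wf_typ E S' -> sub E (tmeet S S') S
  | sub_meet_r : forall E S S',
      wf_env E -> wf_typ E S -> wf_typ E S' -> sub E (tmeet S S') S'
  | sub_meet : forall E T S S',
      sub E T S -> sub E T S' -> sub E T (tmeet S S').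

Inductive typing : env -> trm -> typ -> Prop :=
  | typing_top : forall E, wf_env E -> typing E ttopv ttop
  | typing_var : forall E x T,
      wf_env E -> In (x, btyp T) E -> typing E (fvar x) T
  | typing_sub : forall E t T T',
      typing E t T -> sub E T T' -> typing E t T'
  | typing_abs : forall (L : list atom) E S t T,
      (forall x, ~ In x L ->
         typing (E ++ [(x, btyp S)]) (open_ee t (fvar x)) T) ->
      typing E (abs S t) (tarr S T)
  | typing_app : forall E t s S T,
      typing E t (tarr S T) -> typing E s S -> typing E (app t s) T
  | typing_tabs : forall (L : list atom) E S t T,
      (forall X, ~ In X L ->
         typing (E ++ [(X, bsub S)]) (open_te t (tfvar X)) (open_tt T (tfvar X))) ->
      typing E (tabs S t) (tall S T)
  | typing_tapp : forall E t S T S',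
      typing E t (tall S T) -> sub E S' S ->
      typing E (tapp t S') (open_tt T S').

(* Substituting X /\ S for X turns every use of the bound X <: S (rule Var)
   into the meet projection X /\ S <: S, which holds whatever the new bound of
   X is; so the bound can be weakened to Top (indeed to any well-formed type).
   Every other rule commutes with the substitution: X /\ S is locally closed,
   so substituting it commutes with opening binders, and X does not occur in
   the part of the context to the left of its own binding. *)
From Stdlib Require Import List Arith Lia.
Import ListNotations.

Fixpoint fv_tt (T : typ) : list atom :=
  match T with
  | ttop | tbvar _ => []
  | tfvar X => [X]
  | tarr A B | tall A B | tmeet A B => fv_tt A ++ fv_tt B
  end.

Fixpoint lc_at (n : nat) (T : typ) : Prop :=
  match T with
  | ttop | tfvar _ => True
  | tbvar j => j < n
  | tarr A B | tmeet A B => lc_at n A /\ lc_at n B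
  | tall A B => lc_at n A /\ lc_at (S n) B
  end.

Definition typ_of (b : binding) : typ :=
  match b with bsub T | btyp T => T end.

Lemma fresh_atom (L : list atom) : exists Y, ~ In Y L.
Proof.
  exists (S (list_max L)); intro Hin.
  pose proof (proj1 (list_max_le L _) (le_n _)) as Hmax.
  rewrite Forall_forall in Hmax; specialize (Hmax _ Hin); lia.
Qed.

Lemma lc_at_open_tt_rec_inv T n Y :
  lc_at n (open_tt_rec n (tfvar Y) T) -> lc_at (S n) T.
Proof.
  revert n; induction T as [| j | | | |]; simpl; intros n H; try tauto.
  - destruct (Nat.eqb_spec n j); simpl in H; lia.
  - destruct H; split; eauto.
  - destruct H; split; eauto.
  - destruct H; split; eauto.
Qed.

Lemma open_tt_rec_lc_at T n k W : lc_at n T -> n <= k -> open_tt_rec k W T = T.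
Proof.
  revert n k; induction T as [| j | | | |]; simpl; intros n k H Hk; try reflexivity.
  - destruct (Nat.eqb_spec k j); [lia | reflexivity].
  - destruct H; erewrite IHT1, IHT2; eauto.
  - destruct H; erewrite IHT1, IHT2; eauto; lia.
  - destruct H; erewrite IHT1, IHT2; eauto.
Qed.

Lemma fv_tt_open_tt_rec T k V Z :
  In Z (fv_tt T) -> In Z (fv_tt (open_tt_rec k V T)).
Proof.
  revert k; induction T; simpl; intros k H; try contradiction; auto;
    rewrite in_app_iff in *; destruct H; auto.
Qed.

Lemma subst_tt_fresh Z U T : ~ In Z (fv_tt T) -> subst_tt Z U T = T.
Proof.
  induction T; simpl; intros H; rewrite ?in_app_iff in H; try reflexivity.
  - destruct (Nat.eqb_spec a Z); [subst; tauto | reflexivity].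
  - rewrite IHT1, IHT2; tauto.
  - rewrite IHT1, IHT2; tauto.
  - rewrite IHT1, IHT2; tauto.
Qed.

Lemma subst_b_fresh Z U b : ~ In Z (fv_tt (typ_of b)) -> subst_b Z U b = b.
Proof. destruct b; simpl; intros; rewrite subst_tt_fresh; auto. Qed.

Lemma subst_tt_fvar_neq Z U Y : Y <> Z -> subst_tt Z U (tfvar Y) = tfvar Y.
Proof. intros; simpl; destruct (Nat.eqb_spec Y Z); congruence. Qed.

Lemma subst_tt_open_tt_rec Z U T k V : lc_at 0 U ->
  subst_tt Z U (open_tt_rec k V T) = open_tt_rec k (subst_tt Z U V) (subst_tt Z U T).
Proof.
  intros HU; revert k; induction T; intros k; simpl; try congruence.
  - destruct (k =? n); reflexivity.
  - destruct (a =? Z); [erewrite open_tt_rec_lc_at; eauto; lia | reflexivity].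
Qed.

Lemma subst_te_open_te_rec Z U t k V : lc_at 0 U ->
  subst_te Z U (open_te_rec k V t) = open_te_rec k (subst_tt Z U V) (subst_te Z U t).
Proof.
  intros HU; revert k; induction t; intros k; simpl;
    rewrite ?subst_tt_open_tt_rec by exact HU; congruence.
Qed.

Lemma subst_te_open_ee_rec Z U t k f :
  subst_te Z U (open_ee_rec k f t) = open_ee_rec k (subst_te Z U f) (subst_te Z U t).
Proof.
  revert k; induction t; intros k; simpl; try congruence.
  destruct (k =? n); reflexivity.
Qed.

Lemma subst_tt_open_tt_var Z U T Y : lc_at 0 U -> Y <> Z ->
  subst_tt Z U (open_tt T (tfvar Y)) = open_tt (subst_tt Z U T) (tfvar Y).
Proof.
  intros HU HY; unfold open_tt; rewrite subst_tt_open_tt_rec by exact HU.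
  rewrite subst_tt_fvar_neq by exact HY; reflexivity.
Qed.

Lemma subst_te_open_te_var Z U t Y : lc_at 0 U -> Y <> Z ->
  subst_te Z U (open_te t (tfvar Y)) = open_te (subst_te Z U t) (tfvar Y).
Proof.
  intros HU HY; unfold open_te; rewrite subst_te_open_te_rec by exact HU.
  rewrite subst_tt_fvar_neq by exact HY; reflexivity.
Qed.

Lemma in_dom E x b : In (x, b) E -> In x (dom E).
Proof. intros H; exact (in_map fst _ _ H). Qed.

Lemma wf_typ_lc E T : wf_typ E T -> lc_at 0 T.
Proof.
  induction 1; simpl; auto.
  split; auto.
  destruct (fresh_atom L) as [Y HY].
  exact (lc_at_open_tt_rec_inv _ _ _ (H1 Y HY)).
Qed.

Lemma wf_typ_fv_dom E T Z : wf_typ E T -> In Z (fv_tt T) -> In Z (dom E).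
Proof.
  intros H; revert Z; induction H; simpl; intros Z HZ;
    rewrite ?in_app_iff in HZ; try contradiction.
  - destruct HZ as [<- | []]; eapply in_dom; eauto.
  - destruct HZ; auto.
  - destruct HZ as [HZ | HZ]; auto.
    destruct (fresh_atom (Z :: L)) as [Y HY]; apply not_in_cons in HY as [HYZ HYL].
    specialize (H1 Y HYL Z (fv_tt_open_tt_rec _ _ _ _ HZ)).
    unfold dom in H1; rewrite map_app, in_app_iff in H1; simpl in H1.
    destruct H1 as [H1 | [H1 | []]]; [exact H1 | congruence].
  - destruct HZ; auto.
Qed.

Lemma wf_typ_incl E F T :
  (forall Y U, In (Y, bsub U) E -> exists U', In (Y, bsub U') F) ->
  wf_typ E T -> wf_typ F T.
Proof.
  intros HEF H; revert F HEF.
  induction H as [E | E X U HX | E T1 T2 _ IH1 _ IH2 | L E T1 T2 _ IH1 _ IH2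
                 | E T1 T2 _ IH1 _ IH2]; intros F HEF.
  - constructor.
  - destruct (HEF X U HX) as [U' HU']; econstructor; eauto.
  - constructor; auto.
  - apply wf_typ_all with L; auto.
    intros Y HY; apply IH2; auto.
    intros Z U Hin; apply in_app_or in Hin as [Hin | [Heq | []]].
    + destruct (HEF Z U Hin) as [U' HU']; exists U'; apply in_or_app; auto.
    + injection Heq as <- <-; exists T1; apply in_or_app; simpl; auto.
  - constructor; auto.
Qed.

Lemma wf_typ_weaken_app E F T : wf_typ E T -> wf_typ (E ++ F) T.
Proof.
  apply wf_typ_incl; intros Y U Hin; exists U; apply in_or_app; auto.
Qed.

Lemma wf_env_snoc_inv E x b : wf_env (E ++ [(x, b)]) ->
  wf_env E /\ ~ In x (dom E) /\ wf_typ E (typ_of b).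
Proof.
  intros H; inversion H as [Hnil | E' y T HE HT Hy Heq | E' y T HE HT Hy Heq].
  - destruct E; discriminate.
  - apply app_inj_tail in Heq as [-> Hp]; injection Hp as <- <-; auto.
  - apply app_inj_tail in Heq as [-> Hp]; injection Hp as <- <-; auto.
Qed.

Lemma wf_env_app_inv_l E F : wf_env (E ++ F) -> wf_env E.
Proof.
  revert E; induction F as [| p F IHF] using rev_ind; intros E H.
  - rewrite app_nil_r in H; exact H.
  - rewrite app_assoc in H; destruct p.
    apply IHF, (wf_env_snoc_inv _ _ _ H).
Qed.

Lemma app_mid_snoc {A : Type} (E F : list A) p q :
  (E ++ [p] ++ F) ++ [q] = E ++ [p] ++ F ++ [q].
Proof. rewrite !app_assoc; reflexivity. Qed.

Lemma wf_env_mid_inv E X b F : wf_env (E ++ [(X, b)] ++ F) ->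
  wf_env E /\ ~ In X (dom E) /\ wf_typ E (typ_of b) /\ ~ In X (dom F).
Proof.
  intros H.
  assert (HF : ~ In X (dom F)).
  { clear -H; induction F as [| [y b'] F IHF] using rev_ind; [simpl; tauto |].
    rewrite <- app_mid_snoc in H.
    destruct (wf_env_snoc_inv _ _ _ H) as [HE [Hy _]].
    unfold dom in *; rewrite map_app, in_app_iff; simpl.
    intros [HX | [-> | []]]; [exact (IHF HE HX) |].
    apply Hy; rewrite !map_app, !in_app_iff; simpl; auto. }
  rewrite app_assoc in H; apply wf_env_app_inv_l, wf_env_snoc_inv in H; tauto.
Qed.

Lemma wf_env_bound_fv E Y b Z : wf_env E -> In (Y, b) E ->
  In Z (fv_tt (typ_of b)) -> In Z (dom E).
Proof.
  intros H; revert Y b; induction H as [| E x T HE IH HT _ | E x T HE IH HT _];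
    intros Y b Hin HZ; [contradiction | |];
    unfold dom; rewrite map_app; apply in_or_app; left;
    apply in_app_or in Hin as [Hin | [Heq | []]].
  1, 3: eapply IH; eauto.
  all: injection Heq as -> <-; eapply wf_typ_fv_dom; eauto.
Qed.

Lemma in_env_mid (E F : env) X b Y b' : In (Y, b') (E ++ [(X, b)] ++ F) ->
  In (Y, b') E \/ (Y = X /\ b' = b) \/ In (Y, b') F.
Proof.
  intros H; apply in_app_or in H as [H | [H | H]]; auto.
  injection H as -> ->; auto.
Qed.

Lemma binding_mid_unique E X b F b' : wf_env (E ++ [(X, b)] ++ F) ->
  In (X, b') (E ++ [(X, b)] ++ F) -> b' = b.
Proof.
  intros Hwf Hin; destruct (wf_env_mid_inv _ _ _ _ Hwf) as (_ & HE & _ & HF).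
  destruct (in_env_mid _ _ _ _ _ _ Hin) as [H | [[_ H] | H]].
  - destruct (HE (in_dom _ _ _ H)).
  - exact H.
  - destruct (HF (in_dom _ _ _ H)).
Qed.

Lemma typing_wf_env E t T : typing E t T -> wf_env E.
Proof.
  induction 1 as [| | | L E A t T _ IH | | L E A t T _ IH |]; auto;
    destruct (fresh_atom L) as [x Hx];
    exact (proj1 (wf_env_snoc_inv _ _ _ (IH x Hx))).
Qed.

Lemma in_subst_env Z U E y b : In (y, b) E -> In (y, subst_b Z U b) (subst_env Z U E).
Proof. intros H; exact (in_map (fun p => (fst p, subst_b Z U (snd p))) _ _ H). Qed.

Section MeetNarrowing.

Variables (Theta : env) (X : atom) (S R : typ).
Hypotheses (wf_S : wf_typ Theta S) (wf_R : wf_typ Theta R).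

Local Notation XS := (tmeet (tfvar X) S).
Local Notation old F := (Theta ++ [(X, bsub S)] ++ F).
Local Notation narrow F := (Theta ++ [(X, bsub R)] ++ subst_env X XS F).

Lemma lc_XS : lc_at 0 XS.
Proof. split; [exact I | exact (wf_typ_lc _ _ wf_S)]. Qed.

Lemma narrow_snoc F Y b :
  narrow (F ++ [(Y, b)]) = narrow F ++ [(Y, subst_b X XS b)].
Proof. unfold subst_env; rewrite map_app, !app_assoc; reflexivity. Qed.

Lemma dom_narrow F : dom (narrow F) = dom (old F).
Proof. unfold dom, subst_env; rewrite !map_app, map_map; reflexivity. Qed.

Lemma wf_typ_narrow_X F : wf_typ (narrow F) (tfvar X).
Proof. apply wf_typ_var with R; apply in_or_app; simpl; auto. Qed.

Lemma wf_typ_narrow_S F : wf_typ (narrow F) S.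
Proof. apply wf_typ_weaken_app, wf_S. Qed.

Lemma in_narrow F Y b : wf_env (old F) -> In (Y, b) (old F) -> Y <> X ->
  In (Y, subst_b X XS b) (narrow F).
Proof.
  intros Hwf Hin HY; destruct (wf_env_mid_inv _ _ _ _ Hwf) as (HTheta & HX & _ & _).
  apply in_or_app; destruct (in_env_mid _ _ _ _ _ _ Hin) as [H | [[-> _] | H]].
  - left; rewrite subst_b_fresh; [exact H |].
    intros Hfv; exact (HX (wf_env_bound_fv _ _ _ _ HTheta H Hfv)).
  - contradiction.
  - right; right; apply in_subst_env, H.
Qed.

Lemma wf_typ_narrow E T : wf_typ E T -> forall F, E = old F ->
  wf_typ (narrow F) (subst_tt X XS T).
Proof.
  induction 1 as [E | E Y U HY | E T1 T2 _ IH1 _ IH2 | L E T1 T2 _ IH1 _ IH2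
                 | E T1 T2 _ IH1 _ IH2]; intros F ->; cbn [subst_tt].
  - constructor.
  - destruct (Nat.eqb_spec Y X) as [-> | HYX].
    { constructor; [apply wf_typ_narrow_X | apply wf_typ_narrow_S]. }
    destruct (in_env_mid _ _ _ _ _ _ HY) as [H | [[? _] | H]]; [| congruence |].
    + apply wf_typ_var with U; apply in_or_app; auto.
    + apply wf_typ_var with (subst_tt X XS U).
      apply in_or_app; right; right; exact (in_subst_env _ _ _ _ _ H).
  - constructor; eauto.
  - apply wf_typ_all with (X :: L); [eauto |].
    intros Y HY; apply not_in_cons in HY as [HYX HYL].
    rewrite <- (subst_tt_open_tt_var _ _ _ _ lc_XS HYX).
    specialize (IH2 Y HYL (F ++ [(Y, bsub T1)]) (app_mid_snoc _ _ _ _)).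
    rewrite narrow_snoc in IH2; exact IH2.
  - constructor; eauto.
Qed.

Lemma wf_env_narrow F : wf_env (old F) -> wf_env (narrow F).
Proof.
  induction F as [| [y b] F IHF] using rev_ind; intros H.
  - rewrite app_nil_r in H; simpl.
    destruct (wf_env_snoc_inv _ _ _ H) as (HTheta & HX & _).
    apply wf_env_sub; auto.
  - rewrite narrow_snoc; rewrite <- app_mid_snoc in H.
    destruct (wf_env_snoc_inv _ _ _ H) as (HF & Hy & Hb).
    rewrite <- dom_narrow in Hy.
    pose proof (wf_typ_narrow _ _ Hb F eq_refl) as Hb'.
    destruct b; simpl in *; constructor; auto.
Qed.

Lemma sub_narrow E A B : sub E A B -> forall F, E = old F ->
  sub (narrow F) (subst_tt X XS A) (subst_tt X XS B).
Proof.
  induction 1 as [E Y U Hwf HY | E A Hwf HA | E A Hwf HA | E A B C _ IH1 _ IH2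
                 | E A A' B B' _ IH1 _ IH2 | L E A B _ IH
                 | E A A' Hwf HA HA' | E A A' Hwf HA HA' | E C A A' _ IH1 _ IH2];
    intros F ->; cbn [subst_tt].
  - pose proof (wf_env_narrow _ Hwf) as Hwf'.
    destruct (Nat.eqb_spec Y X) as [-> | HYX].
    + injection (binding_mid_unique _ _ _ _ _ Hwf HY) as ->.
      destruct (wf_env_mid_inv _ _ _ _ Hwf) as (_ & HX & _ & _).
      rewrite subst_tt_fresh by (intros Hfv; exact (HX (wf_typ_fv_dom _ _ _ wf_S Hfv))).
      apply sub_meet_r; [exact Hwf' | apply wf_typ_narrow_X | apply wf_typ_narrow_S].
    + apply sub_var; [exact Hwf' | exact (in_narrow _ _ _ Hwf HY HYX)].
  - apply sub_top; [apply wf_env_narrow | eapply wf_typ_narrow]; eauto.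
  - apply sub_refl; [apply wf_env_narrow | eapply wf_typ_narrow]; eauto.
  - eapply sub_trans; eauto.
  - apply sub_arrow; eauto.
  - apply sub_all with (X :: L).
    intros Y HY; apply not_in_cons in HY as [HYX HYL].
    rewrite <- !(subst_tt_open_tt_var _ _ _ _ lc_XS HYX).
    specialize (IH Y HYL (F ++ [(Y, bsub ttop)]) (app_mid_snoc _ _ _ _)).
    rewrite narrow_snoc in IH; exact IH.
  - apply sub_meet_l; [apply wf_env_narrow | eapply wf_typ_narrow ..]; eauto.
  - apply sub_meet_r; [apply wf_env_narrow | eapply wf_typ_narrow ..]; eauto.
  - apply sub_meet; eauto.
Qed.

Lemma typing_narrow E t T : typing E t T -> forall F, E = old F ->
  typing (narrow F) (subst_te X XS t) (subst_tt X XS T).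
Proof.
  induction 1 as [E Hwf | E y T Hwf Hy | E t T T' _ IH HT | L E A t T _ IH
                 | E t s A T _ IH1 _ IH2 | L E A t T _ IH | E t A T A' _ IH HA'];
    intros F ->; cbn [subst_tt subst_te].
  - constructor; apply wf_env_narrow, Hwf.
  - destruct (Nat.eqb_spec y X) as [-> | HyX].
    + discriminate (binding_mid_unique _ _ _ _ _ Hwf Hy).
    + apply typing_var; [apply wf_env_narrow, Hwf | exact (in_narrow _ _ _ Hwf Hy HyX)].
  - eapply typing_sub; [| eapply sub_narrow]; eauto.
  - apply typing_abs with L.
    intros x Hx; specialize (IH x Hx (F ++ [(x, btyp A)]) (app_mid_snoc _ _ _ _)).
    unfold open_ee in *; rewrite subst_te_open_ee_rec, narrow_snoc in IH; exact IH.
  - eapply typing_app; eauto.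
  - apply typing_tabs with (X :: L).
    intros Y HY; apply not_in_cons in HY as [HYX HYL].
    rewrite <- (subst_te_open_te_var _ _ _ _ lc_XS HYX),
      <- (subst_tt_open_tt_var _ _ _ _ lc_XS HYX).
    specialize (IH Y HYL (F ++ [(Y, bsub A)]) (app_mid_snoc _ _ _ _)).
    rewrite narrow_snoc in IH; exact IH.
  - unfold open_tt; rewrite subst_tt_open_tt_rec by exact lc_XS.
    eapply typing_tapp; [| eapply sub_narrow]; eauto.
Qed.

End MeetNarrowing.

Theorem lemma5p3 :
  forall (Theta Theta' : env) (X : atom) (S : typ) (t : trm) (T : typ),
    typing (Theta ++ [(X, bsub S)] ++ Theta') t T ->
    typing (Theta ++ [(X, bsub ttop)] ++ subst_env X (tmeet (tfvar X) S) Theta')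
           (subst_te X (tmeet (tfvar X) S) t)
           (subst_tt X (tmeet (tfvar X) S) T).
Proof.
  intros Theta Theta' X S t T Ht.
  destruct (wf_env_mid_inv _ _ _ _ (typing_wf_env _ _ _ Ht)) as (_ & _ & wf_S & _).
  exact (typing_narrow Theta X S ttop wf_S (wf_typ_top Theta) _ _ _ Ht Theta' eq_refl).
Qed.
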